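(* For any subset $S\subseteq V$ with $T\subseteq S$ and $|S|\le 0.49n$, we have $\hat c(\delta_{\hat G}(S))\ge \hat c(\delta_{\hat G}(S\cup V_T))$.
   Context: All logarithms are base 2. Let $n$ be a large even integer, $V$ a set of $n$ vertices, $G=(V,E)$ a 10-regular multigraph on $V$ (the union of 10 perfect matchings); $\mathrm{dist}_G$ is hop distance. Fix a small constant $\varepsilon>0$, $\alpha=\frac{\log 5}{\log 5+1-\varepsilon}$, and a terminal set $T\subseteq V$ of size $\lfloor n/2^{(\log n)^\alpha}\rfloor$. For $i\ge 0$ let $N_i=\{u:\min_{t\in T}\mathrm{dist}_G(u,t)=i\}$ and $B_i=N_0\cup\dots\cup N_i$; let $m=\lfloor 10n/(\log n)^\alpha\rfloor$, $r=\min\{i:|B_i|\ge 2m\}-1$ and $V_T=B_r$. Let $E_{r+1}$ be the set of edges between $N_r$ and $N_{r+1}$. Build an edge set $E_T$ with values $c'$: for each $u\in N_r$, let $E_u$ be the set of edges of $E_{r+1}$ incident to $u$, pick an arbitrary edge $e_u$ from $u$ to a vertex of $N_{r-1}$, and add $e_u$ to $E_T$ with $c'(e_u)=|E_u|$; then for $i=r-1,\dots,1$ in turn, for each $u\in N_i$ let $E_u$ be the set of edges currently in $E_T$ incident to $u$, pick an arbitrary edge $e_u$ from $u$ to a vertex of $N_{i-1}$, and add it to $E_T$ with $c'(e_u)=\sum_{e\in E_u}c'(e)$. Define $\hat G=(V,\hat E,\hat c)$ by $\hat E=E\setminus E'$ where $E'$ is the set of edges of $G$ with both endpoints in $V_T$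 that are not in $E_T$; $\hat c(e)=c'(e)$ for $e\in E_T$ and $\hat c(e)=1$ otherwise. For $S\subseteq V$, $\delta_{\hat G}(S)$ is the set of edges of $\hat G$ with exactly one endpoint in $S$, and $\hat c$ of an edge set is the sum of capacities. *)

From HB Require Import structures.
From mathcomp Require Import all_boot.
From Stdlib Require Import Reals.

Set Implicit Arguments.
Unset Strict Implicit.
Unset Printing Implicit Defensive.

Definition log2 (x : R) : R := Rdiv (ln x) (ln 2).

Definition alpha (eps : R) : R :=
  Rdiv (log2 5) (Rminus (Rplus (log2 5) 1) eps).

Definition is_T_size (eps : R) (n t : nat) : Prop :=
  let x := Rdiv (INR n) (Rpower 2 (Rpower (log2 (INR n)) (alpha eps))) in
  Rle (INR t) x /\ Rlt x (Rplus (INR t) 1).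

Definition is_m (eps : R) (n m : nat) : Prop :=
  let x := Rdiv (Rmult 10 (INR n)) (Rpower (log2 (INR n)) (alpha eps)) in
  Rle (INR m) x /\ Rlt x (Rplus (INR m) 1).

Section Graph.
Variable V : finType.
(* G is the union of 10 perfect matchings M k (fixed-point-free involutions).
   The edge of matching k at u is represented by the pair (k, u) (equivalently
   (k, M k u)). *)
Variable M : 'I_10 -> V -> V.
Variable T : {set V}.

Definition adj : rel V := fun u v => [exists k : 'I_10, M k u == v].

Definition within (i : nat) (u : V) : bool :=
  [exists j : 'I_i.+1, [exists p : (nat_of_ord j).-tuple V,
     path adj u p && (last u p \in T)]].

Definition Bset (i : nat) : {set V} := [set u | within i u].

Definition inN (i : nat) (u : V) : bool :=
  within i u && ((i == 0) || ~~ within i.-1 u).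

Variable r : nat.

Definition VT : {set V} := Bset r.

Definition distT (u : V) : nat := find (fun i => within i u) (iota 0 r.+1).

(* par u : the matching index of the chosen edge e_u (from u to N_{i-1}) *)
Variable par : V -> 'I_10.

(* the edge (k, w) is the chosen edge e_w of w, for w \in N_i, 1 <= i <= r *)
Definition isPar (k : 'I_10) (w : V) : bool :=
  [&& w \in VT, w \notin T & par w == k].

(* |E_u| for u in N_r : number of edges of E_{r+1} incident to u *)
Definition degE (u : V) : nat := #|[set k : 'I_10 | inN r.+1 (M k u)]|.

(* capj j u = c'(e_u) for u in N_{r-j} *)
Fixpoint capj (j : nat) (u : V) : nat :=
  match j with
  | 0 => degE u
  | j'.+1 => \sum_(w | inN (r - j') w && (M (par w) w == u)) capj j' w
  end.

Definition cap (u : V) : nat := capj (r - distT u) u.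

Definition inET (k : 'I_10) (u : V) : bool := isPar k u || isPar k (M k u).

Definition inEhat (k : 'I_10) (u : V) : bool :=
  ~~ ((u \in VT) && (M k u \in VT)) || inET k u.

Definition chat (k : 'I_10) (u : V) : nat :=
  if isPar k u then cap u else if isPar k (M k u) then cap (M k u) else 1.

(* \hat c (delta_{\hat G}(S)) : each crossing edge (k,{u, M k u}) is counted
   once, through its endpoint u inside S *)
Definition cutcap (S : {set V}) : nat :=
  \sum_(p : 'I_10 * V | [&& p.2 \in S, M p.1 p.2 \notin S & inEhat p.1 p.2])
     chat p.1 p.2.

End Graph.

(* The capacities are built so that each vertex w of V_T \ T forwards down its
   tree edge e_w everything it receives: one unit for each edge leaving V_T at w,
   plus c'(e_c) for each child c.  Passing from S to S ∪ V_T removes from the cut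
   the tree edges e_w from U = V_T \ S into S and adds at most the edges leaving
   V_T from U; summing the forwarding inequality over U telescopes and shows that
   the removed capacity pays for the added edges. *)

From Pilot Require Import Defs.
From HB Require Import structures.
From mathcomp Require Import all_boot zify.
From Stdlib Require Import Reals.

Set Implicit Arguments.
Unset Strict Implicit.
Unset Printing Implicit Defensive.

Lemma sub_leq_sum (I : Type) (s : seq I) (P P' : pred I) (F : I -> nat) :
  (forall i, P i -> P' i) -> \sum_(i <- s | P i) F i <= \sum_(i <- s | P' i) F i.
Proof. exact: (sub_le_big (op := addn) leqnn (fun m n => leq_addr n m)). Qed.

Section Telescoping.

Variables (V : finType) (M : 'I_10 -> V -> V) (T : {set V}) (r : nat).
Variable par : V -> 'I_10.

Local Notation within := (within M T).
Local Notation inN := (inN M T).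
Local Notation VT := (VT M T r).
Local Notation dist := (distT M T r).
Local Notation parent w := (M (par w) w).
Local Notation cap := (cap M T r par).
Local Notation isPar := (isPar M T r par).
Local Notation chat := (chat M T r par).
Local Notation inEhat := (inEhat M T r par).
Local Notation cutcap := (cutcap M T r par).

Definition exits (u : V) : nat := #|[set k : 'I_10 | M k u \notin VT]|.

Definition child (w c : V) : bool := [&& c \in VT, c \notin T & parent c == w].

Lemma within0 u : within 0 u = (u \in T).
Proof.
apply/existsP/idP => [[j /existsP[p /andP[_]]] | uT].
  by case: j p => -[|//] ? p; rewrite (tuple0 p).
by exists ord0; apply/existsP; exists [tuple]; rewrite /= uT.
Qed.

Lemma within_mono a b u : a <= b -> within a u -> within b u.
Proof.
by move=> le_ab /existsP[j Hj]; apply/existsP; exists (widen_ord (le_ab : a.+1 <= b.+1) j).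
Qed.

Lemma within_adj a k u : within a (M k u) -> within a.+1 u.
Proof.
move=> /existsP[j /existsP[p /andP[Hp Hl]]]; apply/existsP.
exists (Ordinal (ltn_ord j : j.+1 < a.+2)); apply/existsP.
exists [tuple of M k u :: p]; rewrite /= Hp Hl !andbT.
by apply/existsP; exists k.
Qed.

Lemma mem_VT u : (u \in VT) = within r u.
Proof. by rewrite inE. Qed.

Lemma distTP u : u \in VT ->
  [/\ dist u <= r, within (dist u) u & forall j, j < dist u -> ~~ within j u].
Proof.
rewrite mem_VT => Hr.
have has_r : has (within^~ u) (iota 0 r.+1).
  by apply/hasP; exists r; rewrite // mem_iota add0n ltnSn.
have lt_dist := has_r; rewrite has_find size_iota in lt_dist.
split; first by rewrite -ltnS.
  have := nth_find 0 has_r; rewrite nth_iota //.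
move=> j lt_j; have := before_find 0 lt_j.
by rewrite nth_iota ?add0n ?(ltn_trans lt_j) // => ->.
Qed.

Lemma inN_distT a u : a <= r -> inN a u -> dist u = a.
Proof.
move=> le_ar /andP[Ha Hprev].
have [_ Hd Hmin] := distTP (etrans (mem_VT u) (within_mono le_ar Ha)).
apply/eqP; rewrite eqn_leq leqNgt (contraTN (Hmin a) Ha) /=.
case: a Hprev {le_ar Ha} => [//|a] /= Ha.
by rewrite ltnNge; apply: contra Ha => /within_mono; apply.
Qed.

Lemma inN_distT_self u : u \in VT -> inN (dist u) u.
Proof.
move=> /distTP[_ Hd Hmin]; rewrite /Defs.inN Hd /=.
by case: (dist u) Hmin => [//|d] /= ->.
Qed.

Hypothesis M_invol : forall k u, M k (M k u) = u.
Hypothesis par_down :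
  forall u, u \in VT -> u \notin T -> inN (dist u).-1 (parent u).

Lemma parentP c : c \in VT -> c \notin T ->
  [/\ 0 < dist c, parent c \in VT & dist (parent c) = (dist c).-1].
Proof.
move=> cVT cT; have /andP[Hp _] := par_down cVT cT.
have [le_r Hd _] := distTP cVT.
have dist_gt0 : 0 < dist c.
  by rewrite lt0n; apply: contraNneq cT => d0; rewrite -within0 -d0.
have le_pred : (dist c).-1 <= r by rewrite (leq_trans (leq_pred _)).
split=> //; first by rewrite mem_VT (within_mono le_pred Hp).
exact: inN_distT le_pred (par_down cVT cT).
Qed.

Lemma distT_child w c : child w c -> dist c = (dist w).+1.
Proof.
case/and3P=> cVT cT /eqP <-; have [d_gt0 _ ->] := parentP cVT cT.
by rewrite prednK.
Qed.

Lemma exits_interior w : w \in VT -> dist w < r -> exits w = 0.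
Proof.
move=> /distTP[_ Hd _] lt_r; apply/eqP; rewrite cards_eq0; apply/eqP/setP => k.
rewrite !inE; apply/negbTE; rewrite negbK (within_mono lt_r) //.
by apply: (within_adj (k := k)); rewrite M_invol.
Qed.

Lemma sum_child_cap_interior w :
  dist w < r -> \sum_(c | child w c) cap c <= cap w.
Proof.
move=> lt_r; rewrite {2}/Defs.cap -(subnSK lt_r) /=.
have -> : r - (r - (dist w).+1) = (dist w).+1 by rewrite subKn.
rewrite (eq_bigr (capj M T r par (r - (dist w).+1))); last first.
  by move=> c /distT_child d_c; rewrite /Defs.cap d_c.
apply: sub_leq_sum => c child_c.
rewrite -(distT_child child_c) inN_distT_self; last by case/andP: child_c.
by case/and3P: child_c.
Qed.

Lemma exits_boundary w : w \in VT -> dist w = r -> exits w <= cap w.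
Proof.
move=> /distTP[_ Hd _] d_r; rewrite /Defs.cap d_r subnn /=.
apply/subset_leq_card/subsetP => k; rewrite !inE => out_k.
rewrite /Defs.inN /= out_k andbT.
by apply: (within_adj (k := k)); rewrite M_invol -d_r.
Qed.

Lemma no_child_boundary w c : dist w = r -> ~~ child w c.
Proof.
move=> d_r; apply/negP => child_c; have /distTP[le_r _ _] : c \in VT.
  by case/andP: child_c.
by rewrite (distT_child child_c) d_r ltnn in le_r.
Qed.

Lemma exits_child_cap_le w :
  w \in VT -> exits w + \sum_(c | child w c) cap c <= cap w.
Proof.
move=> wVT; have [le_r _ _] := distTP wVT.
case: (ltngtP (dist w) r) le_r => [lt_r _ | //| d_r _].
  by rewrite exits_interior // sum_child_cap_interior.
rewrite big_pred0 ?addn0 ?exits_boundary // => c.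
exact/negbTE/no_child_boundary.
Qed.

Lemma sum_exits_le (U : {set V}) : U \subset VT -> [disjoint U & T] ->
  \sum_(u in U) exits u <= \sum_(w in U | parent w \notin U) cap w.
Proof.
move=> /subsetP sub_UVT disj_UT.
have child_sum w : w \in U ->
    exits w + \sum_(c in U | parent c == w) cap c <= cap w.
  move=> wU; apply: leq_trans (exits_child_cap_le (sub_UVT w wU)).
  rewrite leq_add2l; apply: sub_leq_sum => c /andP[cU par_cw].
  by rewrite /child par_cw sub_UVT // (disjointFr disj_UT cU).
have children_in_U : \sum_(w in U) \sum_(c in U | parent c == w) cap c
    = \sum_(c in U | parent c \in U) cap c.
  rewrite [RHS](partition_big (fun c => parent c) (mem U)) /=; last first.
    by move=> c /andP[].
  apply: eq_bigr => w wU; apply: eq_bigl => c.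
  by case: eqP => [->|]; rewrite ?wU ?andbT ?andbF.
have : \sum_(w in U) (exits w + \sum_(c in U | parent c == w) cap c)
    <= \sum_(w in U) cap w by exact: leq_sum.
rewrite big_split /= children_in_U.
by rewrite [X in _ <= X -> _](bigID (fun w => parent w \in U)) /=; lia.
Qed.

Lemma chat_exit k u : u \in VT -> M k u \notin VT -> chat k u = 1.
Proof.
move=> uVT out_k; rewrite /Defs.chat /Defs.isPar (negbTE out_k) /=.
case: ifP => // /and3P[_ uT /eqP par_u].
by have [_ + _] := parentP uVT uT; rewrite par_u (negbTE out_k).
Qed.

Lemma chat_tree_edge k u : isPar k (M k u) -> chat k u = cap (M k u).
Proof.
move=> par_ku; rewrite /Defs.chat par_ku; case: ifP => // /and3P[uVT uT /eqP par_u].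
case/and3P: par_ku => vVT vT /eqP par_v.
have [du_gt0 _ du] := parentP uVT uT; rewrite par_u in du.
have [dv_gt0 _ dv] := parentP vVT vT; rewrite par_v M_invol in dv.
lia.
Qed.

Lemma sum_exits_pairs (A : {set V}) :
  \sum_(p : 'I_10 * V | (p.2 \in A) && (M p.1 p.2 \notin VT)) 1
  = \sum_(u in A) exits u.
Proof.
under [RHS]eq_bigr do rewrite /exits -sum1dep_card.
by rewrite (exchange_big_dep predT) //= pair_big_dep.
Qed.

Definition cutcap_outside_VT (S : {set V}) : nat :=
  \sum_(p : 'I_10 * V | [&& p.2 \in S, M p.1 p.2 \notin S :|: VT & inEhat p.1 p.2])
    chat p.1 p.2.

Lemma cutcap_setU_VT_le (S : {set V}) :
  cutcap (S :|: VT) <= cutcap_outside_VT S + \sum_(u in VT :\: S) exits u.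
Proof.
rewrite /Defs.cutcap (bigID (fun p => p.2 \in S)) /= leq_add //.
  apply/eq_leq/eq_bigl => -[k u] /=.
  by rewrite in_setU andbC; case: (u \in S); rewrite //= andbF.
rewrite -sum_exits_pairs.
apply: (@leq_trans (\sum_(p | (p.2 \in VT :\: S) && (M p.1 p.2 \notin VT)) chat p.1 p.2)).
  apply: sub_leq_sum => -[k u] /=.
  rewrite in_setU in_setD in_setU andbC.
  by case: (u \in S); case: (u \in VT); case: (M k u \in S); case: (M k u \in VT).
apply/eq_leq/eq_bigr => -[k u] /= /andP[]; rewrite inE => /andP[_ uVT] out_k.
exact: chat_exit.
Qed.

Lemma sum_tree_edges_le_cutcap (S : {set V}) : T \subset S ->
  \sum_(w in VT :\: S | parent w \in S) cap w
  <= \sum_(p | [&& p.2 \in S, M p.1 p.2 \notin S & inEhat p.1 p.2] && (M p.1 p.2 \in VT))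
       chat p.1 p.2.
Proof.
move=> /subsetP sub_TS.
apply: (@leq_trans (\sum_(p | [&& p.2 \in S, isPar p.1 (M p.1 p.2) & M p.1 p.2 \notin S])
                      chat p.1 p.2)); last first.
  apply: sub_leq_sum => -[k u] /= /and3P[uS par_ku vS].
  by rewrite uS vS /Defs.inEhat /Defs.inET par_ku !orbT; case/and3P: par_ku.
rewrite (eq_bigr (fun p => cap (M p.1 p.2))); last first.
  by move=> -[k u] /and3P[_ par_ku _]; rewrite chat_tree_edge.
rewrite (reindex_onto (fun w => (par w, parent w)) (fun p => M p.1 p.2)) /=; last first.
  by move=> -[k u] /= /and3P[_ /and3P[_ _ /eqP ->] _]; rewrite M_invol.
apply/eq_leq/eq_big => w; last by rewrite M_invol.
rewrite /Defs.isPar M_invol !eqxx !andbT in_setD.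
case wS: (w \in S); first by rewrite !andbF.
by rewrite (contraFN (sub_TS w) wS) !andbT andbC.
Qed.

Lemma cutcap_ge (S : {set V}) : T \subset S ->
  cutcap_outside_VT S + \sum_(w in VT :\: S | parent w \in S) cap w <= cutcap S.
Proof.
move=> sub_TS; rewrite /Defs.cutcap (bigID (fun p => M p.1 p.2 \in VT)) /=.
rewrite addnC leq_add ?sum_tree_edges_le_cutcap //.
apply/eq_leq/eq_bigl => -[k u] /=; rewrite in_setU negb_or.
by case: (u \in S); case: (M k u \in S); case: (M k u \in VT); rewrite /= ?andbT ?andbF.
Qed.

Lemma sum_exits_le_tree_edges (S : {set V}) : T \subset S ->
  \sum_(u in VT :\: S) exits u <= \sum_(w in VT :\: S | parent w \in S) cap w.
Proof.
move=> sub_TS; have disj : [disjoint VT :\: S & T].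
  by rewrite disjoints_subset setDE subIset // setCS sub_TS orbT.
apply: leq_trans (sum_exits_le (subsetDl _ _) disj) _.
apply/eq_leq/eq_bigl => w; case wU: (w \in VT :\: S) => //=.
have [wVT wT] : w \in VT /\ w \notin T.
  by move: wU; rewrite in_setD => /andP[wS ->]; rewrite (contra (subsetP sub_TS w)).
by have [_ pVT _] := parentP wVT wT; rewrite in_setD pVT andbT negbK.
Qed.

End Telescoping.

Theorem lemma3p10 :
  exists eps0 : R, Rlt 0 eps0 /\
  forall eps : R, Rlt 0 eps -> Rlt eps eps0 ->
  exists N0 : nat, forall n : nat, N0 <= n -> ~~ odd n ->
  forall (V : finType) (M : 'I_10 -> V -> V),
    #|V| = n ->
    (forall k u, M k (M k u) = u) ->
    (forall k u, M k u != u) ->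
  forall T : {set V}, is_T_size eps n #|T| ->
  forall m : nat, is_m eps n m ->
  forall r : nat,
    (* r + 1 = min { i : |B_i| >= 2m } *)
    2 * m <= #|Bset M T r.+1| ->
    (forall i, i <= r -> #|Bset M T i| < 2 * m) ->
  forall par : V -> 'I_10,
    (* e_u goes from u \in N_i (1 <= i <= r) to a vertex of N_{i-1} *)
    (forall u, u \in VT M T r -> u \notin T ->
       inN M T (distT M T r u).-1 (M (par u) u)) ->
  forall S : {set V}, T \subset S -> 100 * #|S| <= 49 * n ->
    cutcap M T r par (S :|: VT M T r) <= cutcap M T r par S.
Proof.
exists 1%R; split; first exact: Rlt_0_1.
move=> eps _ _; exists 0 => n _ _ V M _ M_invol _ T _ m _ r _ _ par par_down.
move=> S sub_TS _.
apply: leq_trans (cutcap_setU_VT_le par_down S) _.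
apply: leq_trans (cutcap_ge M_invol par_down sub_TS).
by rewrite leq_add2l sum_exits_le_tree_edges.
Qed.
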